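(* Let $\Lambda\subset\mathbb{Z}^n$ be an antichain lattice. Then $\Lambda$ is generic in the sense that it has a minimal Markov basis all of whose elements are fully supported if and only if $\Lambda$, as a subset of $\mathbb{Z}^n$, is generic in the sense that for every $\eta\in\mathbb{Z}^n$ with $T^o_\eta\cap\Lambda=\emptyset$, each face of $T_\eta$ contains at most one element of $\Lambda$.
   Context: An antichain lattice is a subgroup of $\mathbb{Z}^n$ whose distinct elements are pairwise incomparable in the componentwise order. $\alpha\in\mathbb{Z}^n$ is fully supported if $\alpha_i\ne0$ for all $i$. For $u\in\mathbb{N}^n$, the fiber $\mathcal{F}(u)=(u+\Lambda)\cap\mathbb{N}^n$. For a finite $\mathcal{B}\subseteq\Lambda$, $\mathcal{F}(u)_{\mathcal{B}}$ is the graph on $\mathcal{F}(u)$ with an edge $v$–$w$ iff $v-w\in\mathcal{B}$ or $w-v\in\mathcal{B}$. A Markov basis of $\Lambda$ is a finite $\mathcal{B}\subseteq\Lambda$ such that $\mathcal{F}(u)_{\mathcal{B}}$ is connected for every $u\in\mathbb{N}^n$; it is minimal if minimal under inclusion. $T_\eta=\eta-\mathbb{N}^n$, $T^o_\eta=\{\beta:\beta_i<\eta_i\ \forall i\}$; for nonempty $X\subseteq[n]$ the $X$-face of $T_\eta$ is $\{\alpha\in T_\eta:\alpha_i=\eta_i\ \forall i\in X\}$. *)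

From HB Require Import structures.
From mathcomp Require Import all_boot all_order all_algebra.
Set Implicit Arguments. Unset Strict Implicit. Unset Printing Implicit Defensive.
Import Order.TTheory GRing.Theory Num.Theory.
Local Open Scope ring_scope.

Notation zvec n := {ffun 'I_n -> int}.

Section Defs.
Variable n : nat.
Implicit Types (L : zvec n -> Prop) (B : seq (zvec n)) (u v w a b eta : zvec n).

Definition vle a b : Prop := forall i, a i <= b i.

Definition is_subgroup L : Prop :=
  L 0 /\ (forall a b, L a -> L b -> L (a - b)).

Definition antichain_lattice L : Prop :=
  is_subgroup L /\ (forall a b, L a -> L b -> a != b -> ~ vle a b /\ ~ vle b a).

Definition fully_supported a : Prop := forall i, a i != 0.

Definition in_Nn u : Prop := forall i, 0 <= u i.

Definition in_fiber L u v : Prop := in_Nn v /\ L (v - u).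

Definition fadj B : rel (zvec n) := fun v w => (v - w \in B) || (w - v \in B).

Definition fiber_connected L B u : Prop :=
  forall v w, in_fiber L u v -> in_fiber L u w ->
    exists p : seq (zvec n),
      (forall x, x \in p -> in_fiber L u x) /\ path (fadj B) v p /\ last v p = w.

Definition markov_basis L B : Prop :=
  (forall b, b \in B -> L b) /\ (forall u, in_Nn u -> fiber_connected L B u).

Definition minimal_markov_basis L B : Prop :=
  markov_basis L B /\
  (forall B', {subset B' <= B} -> markov_basis L B' -> {subset B <= B'}).

Definition in_T eta a : Prop := vle a eta.
Definition in_To eta a : Prop := forall i, a i < eta i.
Definition in_face eta (X : {set 'I_n}) a : Prop :=
  in_T eta a /\ (forall i, i \in X -> a i = eta i).

Definition markov_generic L : Prop :=
  exists B, minimal_markov_basis L B /\ (forall b, b \in B -> fully_supported b).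

Definition set_generic L : Prop :=
  forall eta, (forall a, L a -> ~ in_To eta a) ->
    forall X : {set 'I_n}, X != set0 ->
      forall a b, L a -> L b -> in_face eta X a -> in_face eta X b -> a = b.

End Defs.

From mathcomp Require Import all_boot all_order all_algebra zify.
From Stdlib Require Import Classical.
Import Order.TTheory GRing.Theory Num.Theory.
Set Implicit Arguments. Unset Strict Implicit. Unset Printing Implicit Defensive.
Local Open Scope ring_scope.

(* Fibers of an antichain lattice are finite by Dickson's lemma, so the
   relation "F(u') + e embeds into F(u) for some nonzero e >= 0" is well
   founded, and both implications go by induction along it.  Two elements of a
   fiber whose supports meet are handled in the smaller fiber obtained by
   subtracting their componentwise minimum.

   (=>) If a Markov basis consists of fully supported moves, then in a fiber
   without strictly positive elements two distinct elements never vanish at a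
   common coordinate: the first move out of one of them yields an element
   which, together with it, covers every coordinate, and the induction then
   produces a strictly positive element.  For eta with T°_eta ∩ Λ = ∅ the
   fiber of eta - a is such a fiber, and a, b in a common face of T_eta give
   elements eta - a, eta - b with a common zero.

   (<=) Call a fully supported c ∈ Λ isolated if no element of F(c+) meets the
   supports of both c+ and c-.  The pairs (c+, c-) of isolated moves form an
   antichain, so there are finitely many, and for generic Λ they form a Markov
   basis: two elements v, w of a fiber with a common zero i are joined through
   v - a for some a ∈ Λ ∩ T°_v, which exists since otherwise the {i}-face of
   T_v would contain both 0 and v - w; elements with disjoint supports and no
   common zero differ by a fully supported move, which is isolated unless some
   element of the fiber meets both supports.  A minimal Markov basis extracted
   from the isolated moves is then fully supported. *)

Lemma common_cover (K T : eqType) (Q : T -> Prop) (cov : K -> seq T -> Prop)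
    (r : seq K) :
  (forall k s s', {subset s <= s'} -> cov k s -> cov k s') ->
  (forall k, k \in r -> exists2 s, (forall x, x \in s -> Q x) & cov k s) ->
  exists2 s, (forall x, x \in s -> Q x) & (forall k, k \in r -> cov k s).
Proof.
move=> cov_mono; elim: r => [|k r IH] covr; first by exists [::].
have [s1 Qs1 cov1] := covr k (mem_head _ _).
have [s2 Qs2 cov2] := IH (fun k' k'r => covr k' (@mem_behead _ (k :: r) k' k'r)).
exists (s1 ++ s2) => [x|k']; first by rewrite mem_cat => /orP [/Qs1|/Qs2].
rewrite inE => /predU1P [->|/cov2 cov2k'];
  [apply: cov_mono cov1 | apply: cov_mono cov2k'] => x;
  by rewrite mem_cat => ->; rewrite ?orbT.
Qed.

Definition eq_on (I : finType) (X : {set I}) (a b : {ffun I -> int}) :=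
  forall i, i \in X -> a i = b i.

Lemma dickson_on (I : finType) (X : {set I}) (A : {ffun I -> int} -> Prop) :
  (forall a, A a -> forall i, i \in X -> 0 <= a i) ->
  (forall a b, A a -> A b -> (forall i, i \in X -> a i <= b i) -> eq_on X a b) ->
  exists2 s : seq {ffun I -> int}, (forall a, a \in s -> A a) &
             (forall a, A a -> exists2 a', a' \in s & eq_on X a a').
Proof.
have [N] := ubnP #|X|; elim: N X A => // N IH X A ltXN Anneg Aanti.
have [[a0 Aa0]|noA] := classic (exists a0, A a0); last first.
  by exists [::] => // a Aa; case: noA; exists a.
pose cov (k : I * nat) (s : seq {ffun I -> int}) :=
  forall a, A a -> a k.1 = k.2%:Z -> exists2 a', a' \in s & eq_on X a a'.
(* an [a] not above [a0] on [X] takes a value [t < a0 i] at some [i \in X];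
   fixing that coordinate leaves the smaller index set [X :\ i] *)
have [|k|s sA covs] :=
    @common_cover _ _ A cov [seq (i, t) | i <- enum X, t <- iota 0 `|a0 i|].
- by move=> k s s' ss' covk a Aa ak; have [a' /ss'] := covk a Aa ak; exists a'.
- case/allpairsPdep=> i [t [+ _ ->]]; rewrite mem_enum => iX.
  have ltXiN : (#|X :\ i| < N)%N by rewrite (cardsD1 i X) iX in ltXN.
  have [||s sA reps] := IH (X :\ i) (fun a => A a /\ a i = t%:Z) ltXiN.
  + by move=> a [Aa _] j /setD1P [_]; apply: Anneg.
  + move=> a b [Aa ai] [Ab bi] le j /setD1P [_ jX]; apply: Aanti => // m mX.
    have [->|mi] := eqVneq m i; first by rewrite ai bi.
    by apply: le; rewrite in_setD1 mi mX.
  exists s => [a /sA [] //|a Aa ai].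
  have [a' a's eqa'] := reps a (conj Aa ai); exists a' => // j jX.
  have [->|ji] := eqVneq j i; first by have [_ ->] := sA a' a's.
  by apply: eqa'; rewrite in_setD1 ji jX.
- exists (a0 :: s) => [a|a Aa]; first by rewrite inE => /predU1P [->|/sA].
  have [/forall_inP le|/forall_inPn [i iX]] := boolP [forall (i | i \in X), a0 i <= a i].
    by exists a0; rewrite ?mem_head // => i iX; rewrite (Aanti a0 a).
  rewrite -ltNge => lt.
  have [a' a's eqa'] : exists2 a', a' \in s & eq_on X a a'.
    apply: (covs (i, `|a i|%N)); rewrite //= ?gez0_abs ?Anneg //.
    apply/allpairsPdep; exists i, `|a i|%N; rewrite mem_enum mem_iota.
    by split => //; have := Anneg a Aa i iX; lia.
  by exists a' => //; rewrite inE a's orbT.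
Qed.

Lemma nonneg_antichain_finite (I : finType) (A : {ffun I -> int} -> Prop) :
  (forall a, A a -> forall i, 0 <= a i) ->
  (forall a b, A a -> A b -> (forall i, a i <= b i) -> a = b) ->
  exists s : seq {ffun I -> int}, forall a, A a -> a \in s.
Proof.
move=> Anneg Aanti; have [||s _ reps] := @dickson_on I setT A.
- by move=> a Aa i _; apply: Anneg.
- by move=> a b Aa Ab le i _; rewrite (Aanti a b) // => j; apply: le.
exists s => a Aa; have [a' a's eqa'] := reps a Aa.
suff -> : a = a' by [].
by apply/ffunP => i; apply: eqa'.
Qed.

Lemma seq_ub (T : eqType) (f : T -> int) (s : seq T) :
  exists M, forall x, x \in s -> f x <= M.
Proof.
elim: s => [|y s [M ubM]]; first by exists 0.
by exists (Num.max (f y) M) => x; rewrite inE => /predU1P [->|/ubM]; lia.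
Qed.

Lemma prop_filter (T : eqType) (P : T -> Prop) (s : seq T) :
  exists B : seq T, forall x, x \in B <-> x \in s /\ P x.
Proof.
elim: s => [|y s [B BE]]; first by exists [::] => x; split => // -[].
have [Py|nPy] := classic (P y); [exists (y :: B) | exists B] => x; rewrite !inE.
- split=> [/predU1P [->|/BE [xs Px]]|[/predU1P [->|xs] Px]]; rewrite ?eqxx //.
    by rewrite xs orbT.
  by apply/orP; right; apply/BE.
- split=> [/BE [xs Px]|[/predU1P [xy|xs] Px]]; first by rewrite xs orbT.
    by rewrite xy in Px.
  exact/BE.
Qed.

(* [lia] does not recognize the coordinates [x i] as atoms of type [int],
   hence the generalization. *)
Ltac vlia :=
  rewrite ?ffunE /=;
  repeat match goal with |- context [@fun_of_fin ?I ?T ?P ?x ?i] =>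
    let a := fresh "a" in set a := (@fun_of_fin I T P x i : int); clearbody a
  end;
  lia.

Ltac vring := apply/ffunP => ?; vlia.

Section Vectors.
Variable n : nat.
Implicit Types (x y z b c : zvec n) (B : seq (zvec n)).

Definition vmin x y : zvec n := [ffun i => Num.min (x i) (y i)].
Definition posv c : zvec n := [ffun i => Num.max (c i) 0].
Definition negv c : zvec n := [ffun i => Num.max (- c i) 0].
Definition share x y := exists j, 0 < x j /\ 0 < y j.
Definition vsum x : int := \sum_i x i.

Lemma posv_sub_negv c : posv c - negv c = c.
Proof. by vring. Qed.

Lemma vmin_nonneg x y : in_Nn x -> in_Nn y -> in_Nn (vmin x y).
Proof. by move=> hx hy i; have := hx i; have := hy i; vlia. Qed.

Lemma vsumD x y : vsum (x + y) = vsum x + vsum y.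
Proof. by rewrite /vsum -big_split; apply: eq_bigr => i _; rewrite ffunE. Qed.

Lemma vsum_ge0 x : in_Nn x -> 0 <= vsum x.
Proof. by move=> hx; apply: sumr_ge0 => i _; apply: hx. Qed.

Lemma coord_le_vsum x j : in_Nn x -> x j <= vsum x.
Proof. by move=> hx; rewrite /vsum (bigD1 j) //= lerDl; apply: sumr_ge0. Qed.

Lemma fadj_cover B x z : (forall b, b \in B -> fully_supported b) ->
  in_Nn x -> in_Nn z -> fadj B x z -> forall i, 0 < x i \/ 0 < z i.
Proof.
move=> Bfs hx hz xz i; have : (x - z) i != 0.
  by case/orP: xz => /Bfs /(_ i) //; rewrite -opprB ffunE oppr_eq0.
by have := hx i; have := hz i; vlia.
Qed.

End Vectors.

Section AntichainLattice.
Variables (n : nat) (L : zvec n -> Prop).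
Hypothesis HL : antichain_lattice L.
Implicit Types (u v w x y z a b c d e g : zvec n) (B : seq (zvec n)).

Lemma lattice0 : L 0.
Proof. by case: HL => -[]. Qed.

Lemma latticeB a b : L a -> L b -> L (a - b).
Proof. by case: HL => -[_ subL] _; apply: subL. Qed.

Lemma latticeN a : L a -> L (- a).
Proof. by move=> La; rewrite -sub0r; apply: latticeB lattice0 La. Qed.

Lemma latticeD a b : L a -> L b -> L (a + b).
Proof. by move=> La Lb; rewrite -[b]opprK; apply/latticeB/latticeN. Qed.

Lemma lattice_neg_coord c : L c -> c != 0 -> exists j, c j < 0.
Proof.
move=> Lc c0; have [nle _] := HL.2 0 c lattice0 Lc (ltac:(by rewrite eq_sym)).
apply: NNPP => nneg; apply: nle => i; rewrite ffunE.
by rewrite leNgt; apply/negP => ci; apply: nneg; exists i.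
Qed.

Lemma lattice_nonneg a : L a -> in_Nn a -> a = 0.
Proof.
move=> La ha; apply/eqP; apply: contraT => a0.
by have [j] := lattice_neg_coord La a0; rewrite ltNge ha.
Qed.

Lemma fiber_refl u : in_Nn u -> in_fiber L u u.
Proof. by move=> hu; split => //; rewrite subrr; apply: lattice0. Qed.

Lemma fiber_sub u x y : in_fiber L u x -> in_fiber L u y -> L (x - y).
Proof.
move=> [_ Lx] [_ Ly]; have -> : x - y = (x - u) - (y - u) by vring.
exact: latticeB.
Qed.

Lemma fiber_trans u x y : in_fiber L u x -> in_fiber L x y -> in_fiber L u y.
Proof.
move=> [_ Lx] [hy Ly]; split => //.
have -> : y - u = (y - x) + (x - u) by vring.
exact: latticeD.
Qed.

Lemma fiber_add u u' e z : in_Nn e -> in_fiber L u (u' + e) ->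
  in_fiber L u' z -> in_fiber L u (z + e).
Proof.
move=> he [_ Lu'e] [hz Lz]; split; first by move=> i; have := hz i; have := he i; vlia.
have -> : z + e - u = (z - u') + (u' + e - u) by vring.
exact: latticeD.
Qed.

Lemma fiber_pos_coord u x y : in_fiber L u x -> in_fiber L u y -> x != y ->
  exists k, 0 < y k.
Proof.
move=> hx hy xy; apply: NNPP => nk.
have y0 : y = 0.
  apply/ffunP => i; apply/eqP; rewrite ffunE eq_le (hy.1 i) andbT leNgt.
  by apply/negP => yi; apply: nk; exists i.
have x0 : x = 0.
  by apply: (lattice_nonneg _ hx.1); rewrite -[x]subr0 -y0; apply: fiber_sub hx hy.
by rewrite x0 y0 eqxx in xy.
Qed.

Lemma fiber_vsum_bounded u : exists M, forall x, in_fiber L u x -> vsum x <= M.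
Proof.
have [||s fs] := @nonneg_antichain_finite _ (in_fiber L u); first by move=> x [].
  move=> x y hx hy le; apply/esym/subr0_eq/lattice_nonneg; first exact: fiber_sub hy hx.
  by move=> i; have := le i; vlia.
by have [M ubM] := seq_ub (@vsum n) s; exists M => x /fs /ubM.
Qed.

(* [F(u') + e] embeds into [F(u)]; as fibers are finite, the sums of the
   elements of [F(u')] are then strictly smaller, which makes this relation
   well founded. *)
Definition fiber_below u' u :=
  in_Nn u' /\ exists2 e, in_Nn e /\ (exists j, 0 < e j) & in_fiber L u (u' + e).

Lemma fiber_ind (P : zvec n -> Prop) :
  (forall u, in_Nn u -> (forall u', fiber_below u' u -> P u') -> P u) ->
  forall u, in_Nn u -> P u.
Proof.
move=> step.
suff bounded N u : in_Nn u -> (forall x, in_fiber L u x -> vsum x < N%:Z) -> P u.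
  move=> u hu; have [M ubM] := fiber_vsum_bounded u.
  by apply: (bounded `|M|.+1%N u hu) => x /ubM; lia.
elim: N u => [|N IH] u hu ub.
  by have := ub u (fiber_refl hu); have := vsum_ge0 hu; lia.
apply: step => // u' [hu' [e [he [j ej]] u'e]]; apply: IH => // x hx.
have := ub _ (fiber_add he u'e hx); rewrite vsumD.
by have := coord_le_vsum j he; lia.
Qed.

Lemma share_below u p q : in_fiber L u p -> in_fiber L u q -> share p q ->
  fiber_below (p - vmin p q) u.
Proof.
move=> hp hq [j [pj qj]]; split.
  by move=> i; have := hp.1 i; have := hq.1 i; vlia.
exists (vmin p q); last by rewrite subrK.
by split; [apply: vmin_nonneg hp.1 hq.1 | exists j; move: pj qj; vlia].
Qed.

Lemma fiber_sub_vmin u p q : in_fiber L u p -> in_fiber L u q ->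
  in_fiber L (p - vmin p q) (q - vmin p q).
Proof.
move=> hp hq; split; first by move=> i; have := hp.1 i; have := hq.1 i; vlia.
by rewrite opprB addrA subrK; exact: fiber_sub hq hp.
Qed.

Lemma fiber_share_lift u p q z : in_fiber L u p -> in_fiber L u q ->
  in_fiber L (p - vmin p q) z -> in_fiber L u (z + vmin p q).
Proof.
move=> hp hq; apply: fiber_add; first exact: vmin_nonneg hp.1 hq.1.
by rewrite subrK.
Qed.

Definition fiber_nopos u := ~ exists2 z, in_fiber L u z & forall j, 0 < z j.

Definition fiber_zero_unique u := forall x y, in_fiber L u x -> in_fiber L u y ->
  forall i, x i = 0 -> y i = 0 -> x = y.

Lemma fiber_nopos_share u p q : in_fiber L u p -> in_fiber L u q ->
  fiber_nopos u -> fiber_nopos (p - vmin p q).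
Proof.
move=> hp hq npu [z hz zpos]; apply: npu; exists (z + vmin p q).
  exact: fiber_share_lift.
by move=> j; have := zpos j; have := vmin_nonneg hp.1 hq.1 j; vlia.
Qed.

Section ZeroUniqueStep.
Variable u : zvec n.
Hypothesis npu : fiber_nopos u.
Hypothesis IH : forall u', fiber_below u' u -> fiber_nopos u' -> fiber_zero_unique u'.

Lemma share_cover p q : in_fiber L u p -> in_fiber L u q -> p != q -> share p q ->
  forall k, 0 < p k \/ 0 < q k.
Proof.
move=> hp hq pq shpq k; apply: NNPP => /not_or_and [pk qk].
have below := share_below hp hq shpq.
have E := IH below (fiber_nopos_share hp hq npu) (fiber_refl below.1)
  (fiber_sub_vmin hp hq) (i := k).
have {E} : p - vmin p q = q - vmin p q.
  by apply: E; move: pk qk (hp.1 k) (hq.1 k); vlia.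
by move/(congr1 (fun x => x + vmin p q)); rewrite !subrK => /eqP; rewrite (negbTE pq).
Qed.

(* The support of [z] meets that of [y], so [x], [y], [z] together cover all
   coordinates; since [x] and [y] have disjoint supports, [z] is positive. *)
Lemma common_zero_nonshare x y i : in_fiber L u x -> in_fiber L u y -> x != y ->
  x i = 0 -> y i = 0 -> forall z, in_fiber L u z -> z != x -> ~ share x z.
Proof.
move=> hx hy xy xi yi z hz zx shxz.
have xz := share_cover hx hz (ltac:(by rewrite eq_sym)) shxz.
have nxy : ~ share x y by move=> sh; have := share_cover hx hy xy sh i; lia.
have [k yk] := fiber_pos_coord hx hy xy.
have zk : 0 < z k by case: (xz k) => // xk; case: nxy; exists k.
have zy : z != y by apply: contraPneq shxz => ->.
have yz := share_cover hy hz (ltac:(by rewrite eq_sym)) (ex_intro _ k (conj yk zk)).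
apply: npu; exists z => // m.
by case: (xz m) => // xm; case: (yz m) => // ym; case: nxy; exists m.
Qed.

End ZeroUniqueStep.

(* A move out of [x] is fully supported, so [x] and the next vertex [z] of a
   path to [y] together cover every coordinate, while [y] meets neither. *)
Lemma markov_fiber_zero_unique B : markov_basis L B ->
    (forall b, b \in B -> fully_supported b) ->
  forall u, in_Nn u -> fiber_nopos u -> fiber_zero_unique u.
Proof.
move=> [_ BL] Bfs; apply: fiber_ind => u hu IH npu x y hx hy i xi yi.
apply/eqP; apply: contraT => xy.
have [p [pF [xp pxy]]] := BL u hu x y hx hy.
case: p pF xp pxy => [_ _ /= xyE|z p pF /= /andP [xz _] _].
  by rewrite xyE eqxx in xy.
have hz := pF z (mem_head _ _).
have cover := fadj_cover Bfs hx.1 hz.1 xz.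
have zi : 0 < z i by case: (cover i); rewrite // xi ltxx.
have zx : z != x by apply: contraTneq zi => ->; rewrite xi ltxx.
have [zyE|zy] := eqVneq z y; first by rewrite zyE yi ltxx in zi.
have [k yk] := fiber_pos_coord hx hy xy.
have yx : y != x by rewrite eq_sym.
have nyx := common_zero_nonshare npu IH hy hx yx yi xi hx xy.
have nyz := common_zero_nonshare npu IH hy hx yx yi xi hz zy.
by case: (cover k) => h; [case: nyx | case: nyz]; exists k.
Qed.

Lemma set_generic_of_markov_generic : markov_generic L -> set_generic L.
Proof.
move=> [B [[mB _] Bfs]] eta noint X /set0Pn [i iX] a b La Lb [aT aX] [bT bX].
have hea : in_Nn (eta - a) by move=> j; have := aT j; vlia.
have npea : fiber_nopos (eta - a).
  move=> [z [_ Lz] zpos]; apply: (noint (eta - z)).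
    have -> : eta - z = a - (z - (eta - a)) by vring.
    exact: latticeB.
  by move=> j; have := zpos j; vlia.
have heb : in_fiber L (eta - a) (eta - b).
  split; first by move=> j; have := bT j; vlia.
  have -> : eta - b - (eta - a) = a - b by vring.
  exact: latticeB.
apply/oppr_inj/(addrI eta).
apply: (markov_fiber_zero_unique mB Bfs hea npea (fiber_refl hea) heb (i := i)).
  by have := aX i iX; vlia.
by have := bX i iX; vlia.
Qed.

Definition isolated_move c := [/\ L c, fully_supported c &
  ~ exists z, [/\ in_fiber L (posv c) z, share z (posv c) & share z (negv c)]].

Lemma isolated_move_antichain c d : isolated_move c -> isolated_move d ->
  (forall i, posv c i <= posv d i) -> (forall i, negv c i <= negv d i) -> c = d.
Proof.
move=> [Lc fsc _] [Ld _ nzd] lep len.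
have c0 (i : 'I_n) : c != 0 by apply/eqP => c0; move: (fsc i); rewrite c0 ffunE eqxx.
have posE : posv c = posv d.
  apply/ffunP => i; apply: NNPP => ne; apply: nzd.
  have [j cj] := lattice_neg_coord Lc (c0 i).
  exists (posv d - c); split.
  - split; first by move=> m; have := lep m; vlia.
    by rewrite addrAC subrr sub0r; apply: latticeN.
  - by exists i; move: ne (lep i); vlia.
  - by exists j; move: cj (lep j) (len j); vlia.
have negE : negv c = negv d.
  apply/ffunP => i; apply: NNPP => ne; apply: nzd.
  have [j cj] : exists j, (- c) j < 0.
    by apply: lattice_neg_coord (latticeN Lc) _; rewrite oppr_eq0 (c0 i).
  exists (negv d + c); split.
  - split; first by move=> m; have := len m; vlia.
    have -> : negv d + c - posv d = c - (posv d - negv d) by vring.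
    by rewrite posv_sub_negv; apply: latticeB.
  - by exists j; move: cj (lep j) (len j); vlia.
  - by exists i; move: ne (len i); vlia.
by rewrite -[c]posv_sub_negv -[d]posv_sub_negv posE negE.
Qed.

Lemma isolated_move_finite : exists s : seq (zvec n), forall c, isolated_move c -> c \in s.
Proof.
pose pn c : {ffun 'I_n + 'I_n -> int} :=
  [ffun k => match k with inl i => posv c i | inr i => negv c i end].
pose unpn (p : {ffun 'I_n + 'I_n -> int}) : zvec n := [ffun i => p (inl i) - p (inr i)].
have pnK c : unpn (pn c) = c by vring.
have [||s pns] := @nonneg_antichain_finite _ (fun p => exists2 c, isolated_move c & p = pn c).
- by move=> _ [c _ ->] [i|i]; vlia.
- move=> _ _ [c hc ->] [d hd ->] le; rewrite (isolated_move_antichain hc hd) // => i.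
  + by have := le (inl i); rewrite !ffunE.
  + by have := le (inr i); rewrite !ffunE.
by exists (map unpn s) => c hc; rewrite -[c]pnK; apply/map_f/pns; exists c.
Qed.

Definition fiber_conn B u v w := exists p : seq (zvec n),
  (forall x, x \in p -> in_fiber L u x) /\ path (fadj B) v p /\ last v p = w.

Lemma fiber_conn_refl B u v : fiber_conn B u v v.
Proof. by exists [::]. Qed.

Lemma fiber_conn_trans B u v w z :
  fiber_conn B u v w -> fiber_conn B u w z -> fiber_conn B u v z.
Proof.
move=> [p [pF [vp pw]]] [q [qF [wq qz]]]; exists (p ++ q); split; last split.
- by move=> x; rewrite mem_cat => /orP [/pF|/qF].
- by rewrite cat_path vp pw wq.
- by rewrite last_cat pw.
Qed.

Lemma fiber_conn_shift B u u' v w g : fiber_conn B u' v w ->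
  (forall x, in_fiber L u' x -> in_fiber L u (x + g)) ->
  fiber_conn B u (v + g) (w + g).
Proof.
move=> [p [pF [vp pw]]] lift; exists (map (fun x => x + g) p); split; last split.
- by move=> _ /mapP [x xp ->]; apply/lift/pF.
- have subDD a b : (a + g) - (b + g) = a - b by rewrite opprD addrACA subrr addr0.
  elim: p v vp {pF pw} => //= x p IH v /andP [vx xp].
  by rewrite IH // andbT /fadj !subDD.
- by rewrite (last_map (fun x => x + g)) pw.
Qed.

Section IsolatedMovesMarkov.
Variable B : seq (zvec n).
Hypotheses (BL : forall b, b \in B -> L b) (Biso : forall c, isolated_move c -> c \in B).
Hypothesis generic : set_generic L.

Section ConnStep.
Variable u : zvec n.
Hypothesis IH : forall u', fiber_below u' u -> fiber_connected L B u'.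

Lemma fiber_conn_share v w : in_fiber L u v -> in_fiber L u w -> share v w ->
  fiber_conn B u v w.
Proof.
move=> hv hw vw; have below := share_below hv hw vw.
have := fiber_conn_shift (IH below (fiber_refl below.1) (fiber_sub_vmin hv hw))
  (fun x => @fiber_share_lift u v w x hv hw).
by rewrite !subrK.
Qed.

(* If no element of [L] lies in the interior of [T_v], genericity applied to
   the [{i}]-face of [T_v], which contains [0] and [v - w], forces [v = w]. *)
Lemma fiber_conn_common_zero v w i : in_fiber L u v -> in_fiber L u w ->
  v i = 0 -> w i = 0 -> fiber_conn B u v w.
Proof.
move=> hv hw vi wi; have [<-|vw] := eqVneq w v; first exact: fiber_conn_refl.
have [[a La aT]|noint] := classic (exists2 a, L a & in_To v a).
  have hva : in_fiber L u (v - a).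
    split; first by move=> j; have := aT j; vlia.
    by rewrite addrAC; apply: latticeB hv.2 La.
  have [k vk] := fiber_pos_coord hw hv vw.
  have [k' wk] := fiber_pos_coord hv hw (ltac:(by rewrite eq_sym)).
  apply: (fiber_conn_trans (fiber_conn_share hv hva _) (fiber_conn_share hva hw _)).
    by exists k; split => //; move: (aT k); vlia.
  by exists k'; split => //; move: (aT k'); vlia.
have /eqP : 0 = v - w.
  apply: (generic (eta := v) _ (X := [set i])) => //.
  - by move=> a La aT; apply: noint; exists a.
  - by apply/set0Pn; exists i; rewrite inE.
  - exact: lattice0.
  - exact: fiber_sub hv hw.
  - split=> [j|j /set1P ->]; rewrite ffunE //; exact: hv.1.
  - by split=> [j|j /set1P ->]; [have := hw.1 j | move: wi]; vlia.
by rewrite eq_sym subr_eq0 eq_sym (negbTE vw).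
Qed.

Lemma fiber_connected_step : fiber_connected L B u.
Proof.
move=> v w hv hw.
have [vw|nvw] := classic (share v w); first exact: fiber_conn_share.
have [[i [vi wi]]|nz] := classic (exists i, v i = 0 /\ w i = 0).
  exact: fiber_conn_common_zero hv hw vi wi.
have coord j : (0 < v j /\ w j = 0) \/ (v j = 0 /\ 0 < w j).
  move: (hv.1 j) (hw.1 j) => v0 w0.
  have : ~ (0 < v j /\ 0 < w j) by move=> h; apply: nvw; exists j.
  have : ~ (v j = 0 /\ w j = 0) by move=> h; apply: nz; exists j.
  by lia.
have vE : posv (v - w) = v by apply/ffunP => j; case: (coord j) => -[]; vlia.
have wE : negv (v - w) = w by apply/ffunP => j; case: (coord j) => -[]; vlia.
have [iso|niso] := classic (isolated_move (v - w)).
  exists [:: w]; split; last by rewrite /= /fadj Biso.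
  by move=> x; rewrite inE => /eqP ->.
have [z [hz zv zw]] : exists z, [/\ in_fiber L v z, share z v & share z w].
  apply: NNPP => nz'; apply: niso; split; first exact: fiber_sub hv hw.
    by move=> j; case: (coord j) => -[]; vlia.
  by rewrite vE wE.
have hz' := fiber_trans hv hz.
apply: (fiber_conn_trans (fiber_conn_share hv hz' _) (fiber_conn_share hz' hw zw)).
by case: zv => j [zj vj]; exists j.
Qed.

End ConnStep.

Lemma isolated_moves_markov : markov_basis L B.
Proof. by split => //; apply: fiber_ind => u _; apply: fiber_connected_step. Qed.

End IsolatedMovesMarkov.

Lemma eq_markov_basis B1 B2 : B1 =i B2 -> markov_basis L B1 -> markov_basis L B2.
Proof.
move=> B12 [B1L conn1]; split=> [b|u hu v w hv hw]; first by rewrite -B12; apply: B1L.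
have [p [pF [vp pw]]] := conn1 u hu v w hv hw; exists p; split => //.
by rewrite -(eq_path (e := fadj B1)) // => x y; rewrite /fadj !B12.
Qed.

Lemma markov_basis_minimal_sub B0 : markov_basis L B0 ->
  exists2 B, {subset B <= B0} & minimal_markov_basis L B.
Proof.
have [N] := ubnP (size B0); elim: N B0 => // N IH B0 ltB0N mB0.
have [minB0|] := classic (forall B', {subset B' <= B0} -> markov_basis L B' ->
  {subset B0 <= B'}); first by exists B0.
move=> /not_all_ex_not [B' nB']; have [B'B0 nB''] := imply_to_and _ _ nB'.
have [mB' /not_all_ex_not [b nb]] := imply_to_and _ _ nB''.
have [bB0 bB'] := imply_to_and _ _ nb.
pose B1 := [seq x <- B0 | x \in B'].
have B'B1 : B' =i B1 by move=> x; rewrite mem_filter andb_idr //; apply: B'B0.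
have [|B BB1 minB] := IH B1 _ (eq_markov_basis B'B1 mB').
  rewrite size_filter (leq_trans _ (ltnSE ltB0N)) // -(count_predC (mem B') B0).
  rewrite -addn1 leq_add2l -has_count; apply/hasP; exists b => //=; exact/negP.
by exists B => // x /BB1; rewrite mem_filter => /andP [].
Qed.

Lemma markov_generic_of_set_generic : set_generic L -> markov_generic L.
Proof.
move=> generic; have [s isos] := isolated_move_finite.
have [B0 B0E] := prop_filter isolated_move s.
have mB0 : markov_basis L B0.
  apply: isolated_moves_markov generic => [b /B0E [_ []] //|c iso].
  by apply/B0E; split => //; apply: isos.
have [B BB0 minB] := markov_basis_minimal_sub mB0.
by exists B; split => // b /BB0 /B0E [_ []].
Qed.

End AntichainLattice.

Theorem mainTheorem10 (n : nat) (L : zvec n -> Prop) :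
  antichain_lattice L -> (markov_generic L <-> set_generic L).
Proof.
move=> HL; split; [exact: set_generic_of_markov_generic | exact: markov_generic_of_set_generic].
Qed.
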